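(* Let $(\Omega,+)$ be a group, $b$ a subgroup and $y\subseteq\Omega$ with $y\top b$. Then the set ${}^\top b=\{x\subseteq\Omega:x\top b\}$ is stable under the ternary law $(x,u,z)\mapsto\Sigma(b,x,u,z)$ and with the induced law is a torsor, denoted $U_b$; and there are natural torsor isomorphisms between: (1) $U_b$; (2) the set of (images of) sections $\sigma:\Omega/b\to\Omega$ of the canonical projection $\Omega\to\Omega/b$ onto left cosets, with pointwise torsor law $(\sigma\sigma'\sigma'')(u)=\sigma(u)-\sigma'(u)+\sigma''(u)$; (3) the set $\mathrm{Map}(y,b)$ of maps $y\to b$ with pointwise torsor law $(F,F',F'')\mapsto F-F'+F''$. (The isomorphism (2)$\to$(1) sends $\sigma$ to its image; (3)$\to$(1) sends $F$ to $\{\eta+F(\eta):\eta\in y\}$.) Similarly, the set $b^\top=\{x:b\top x\}$, denoted $\check U_b$, is a torsor which can be identified with the set of sections of the projection $\Omega\to b\backslash\Omega$ onto right cosets, with its pointwise torsor structure.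
   Context: $(\Omega,+)$ is a group written additively but not necessarily abelian. For subsets $x,y$, $x\top y$ means every $\omega\in\Omega$ has a unique decomposition $\omega=\xi+\eta$ with $\xi\in x,\eta\in y$. $\Sigma(b,x,u,z)=\{\omega:\exists\beta,\beta'\in b:\ \omega+\beta\in x,\ \omega+\beta'+\beta\in u,\ \omega+\beta'\in z\}$. A torsor is a set $G$ with a map $(x,y,z)\mapsto(xyz)$ satisfying $(xy(zuv))=(x(uzy)v)=((xyz)uv)$ and $(xxy)=y=(yxx)$. *)

Set Implicit Arguments.
Unset Strict Implicit.

Record group := Group {
  carrier :> Type;
  gadd : carrier -> carrier -> carrier;
  gzero : carrier;
  gopp : carrier -> carrier;
  gaddA : forall x y z, gadd x (gadd y z) = gadd (gadd x y) z;
  gadd0l : forall x, gadd gzero x = x;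
  gadd0r : forall x, gadd x gzero = x;
  gaddNl : forall x, gadd (gopp x) x = gzero;
  gaddNr : forall x, gadd x (gopp x) = gzero
}.

Arguments gadd {g} _ _.
Arguments gzero {g}.
Arguments gopp {g} _.

Section Defs.
Variable O : group.

Definition is_subgroup (b : O -> Prop) : Prop :=
  b gzero /\ (forall x y, b x -> b y -> b (gadd x y)) /\ (forall x, b x -> b (gopp x)).

Definition top (x y : O -> Prop) : Prop :=
  forall w : O, exists! p : O * O, x (fst p) /\ y (snd p) /\ w = gadd (fst p) (snd p).

Definition Sigma (b x u z : O -> Prop) : O -> Prop :=
  fun w => exists beta beta', b beta /\ b beta' /\
    x (gadd w beta) /\ u (gadd (gadd w beta') beta) /\ z (gadd w beta').

(* Mirror law for b^T (right cosets): omega = xi - upsilon + zeta where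
   xi = beta' + omega in x, upsilon = beta + beta' + omega in u, zeta = beta + omega in z. *)
Definition Sigma_check (b x u z : O -> Prop) : O -> Prop :=
  fun w => exists beta beta', b beta /\ b beta' /\
    x (gadd beta' w) /\ u (gadd (gadd beta beta') w) /\ z (gadd beta w).

Definition Utop (b : O -> Prop) : (O -> Prop) -> Prop := fun x => top x b.
Definition Ucheck (b : O -> Prop) : (O -> Prop) -> Prop := fun x => top b x.

Definition lcoset (b : O -> Prop) (w : O) : O -> Prop :=
  fun xi => exists beta, b beta /\ xi = gadd w beta.
Definition rcoset (b : O -> Prop) (w : O) : O -> Prop :=
  fun xi => exists beta, b beta /\ xi = gadd beta w.

Definition LCosets (b : O -> Prop) := {C : O -> Prop | exists w, C = lcoset b w}.
Definition RCosets (b : O -> Prop) := {C : O -> Prop | exists w, C = rcoset b w}.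

Definition lsection (b : O -> Prop) (s : LCosets b -> O) : Prop :=
  forall C, lcoset b (s C) = proj1_sig C.
Definition rsection (b : O -> Prop) (s : RCosets b -> O) : Prop :=
  forall C, rcoset b (s C) = proj1_sig C.

Definition pw_law (A : Type) (s s' s'' : A -> O) : A -> O :=
  fun a => gadd (gadd (s a) (gopp (s' a))) (s'' a).

Definition image (A : Type) (s : A -> O) : O -> Prop :=
  fun w => exists a, s a = w.

Definition maps_into (y b : O -> Prop) (F : {eta : O | y eta} -> O) : Prop :=
  forall eta, b (F eta).

Definition graph_set (y : O -> Prop) (F : {eta : O | y eta} -> O) : O -> Prop :=
  fun w => exists eta : {eta : O | y eta}, w = gadd (proj1_sig eta) (F eta).

End Defs.

Definition is_torsor (T : Type) (G : T -> Prop) (m : T -> T -> T -> T) : Prop :=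
  (forall x y z, G x -> G y -> G z -> G (m x y z)) /\
  (forall x y z u v, G x -> G y -> G z -> G u -> G v ->
     m x y (m z u v) = m x (m u z y) v /\ m x (m u z y) v = m (m x y z) u v) /\
  (forall x y, G x -> G y -> m x x y = y /\ m y x x = y).

Definition torsor_iso (T1 T2 : Type) (G1 : T1 -> Prop) (m1 : T1 -> T1 -> T1 -> T1)
  (G2 : T2 -> Prop) (m2 : T2 -> T2 -> T2 -> T2) (f : T1 -> T2) : Prop :=
  (forall x, G1 x -> G2 (f x)) /\
  (forall x x', G1 x -> G1 x' -> f x = f x' -> x = x') /\
  (forall z, G2 z -> exists x, G1 x /\ f x = z) /\
  (forall x y z, G1 x -> G1 y -> G1 z -> f (m1 x y z) = m2 (f x) (f y) (f z)).

(* A subset x with x ⊤ b meets every left coset w + b in exactly one point, so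
   it is the image of a unique section of Ω → Ω/b; under this bijection
   Σ(b, x, u, z) is the image of the pointwise combination σ - σ' + σ'', hence
   the torsor axioms for U_b are transported from those of pointwise
   combination, which hold in any group.  A set y with y ⊤ b is a transversal,
   so a section is the same as a map F : y → b via σ(η + b) = η + F(η).  Right
   cosets are left cosets of the opposite group, and transporting everything
   through it gives the statements about b^⊤. *)
From Stdlib Require Import FunctionalExtensionality PropExtensionality
  ProofIrrelevance IndefiniteDescription.
Set Implicit Arguments.

Section GroupFacts.
Context {O : group}.
Local Notation "x + y" := (@gadd O x y).
Local Notation "- x" := (@gopp O x).

Lemma gaddKr (x y : O) : - x + (x + y) = y.
Proof. rewrite gaddA, gaddNl, gadd0l; reflexivity. Qed.

Lemma gaddNKr (x y : O) : x + (- x + y) = y.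
Proof. rewrite gaddA, gaddNr, gadd0l; reflexivity. Qed.

Lemma gaddI (x y z : O) : x + y = x + z -> y = z.
Proof. intro E; rewrite <- (gaddKr x y), E, gaddKr; reflexivity. Qed.

Lemma goppD (x y : O) : - (x + y) = - y + - x.
Proof. apply (gaddI (x + y)); rewrite gaddNr, <- gaddA, gaddNKr, gaddNr; reflexivity. Qed.

Lemma goppK (x : O) : - - x = x.
Proof. apply (gaddI (- x)); rewrite gaddNr, gaddNl; reflexivity. Qed.

Lemma gadd_eq_sub {a c a' c' : O} : a + c = a' + c' -> - a + a' = c + - c'.
Proof.
  intro E; apply (gaddI a).
  rewrite gaddNKr, gaddA, E, <- gaddA, gaddNr, gadd0r; reflexivity.
Qed.

End GroupFacts.

Ltac gsimpl := repeat progress rewrite <- ?gaddA, ?goppD, ?goppK, ?gaddKr,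
  ?gaddNKr, ?gaddNr, ?gaddNl, ?gadd0l, ?gadd0r.

Lemma sig_eq (A : Type) (P : A -> Prop) (u v : {a : A | P a}) :
  proj1_sig u = proj1_sig v -> u = v.
Proof. apply eq_sig_hprop; intros; apply proof_irrelevance. Qed.

Section Decomposition.
Variable O : group.
Variables x y : O -> Prop.
Hypothesis Hxy : top x y.

Lemma top_decomp (w : O) : exists a c, x a /\ y c /\ w = gadd a c.
Proof. destruct (Hxy w) as [[a c] [(Ha & Hc & E) _]]; exists a, c; auto. Qed.

Lemma top_decomp_unique {a c a' c' : O} :
  x a -> y c -> x a' -> y c' -> gadd a c = gadd a' c' -> a = a' /\ c = c'.
Proof.
  intros Ha Hc Ha' Hc' E.
  destruct (Hxy (gadd a c)) as [p [_ Hp]].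
  assert ((a, c) = (a', c')) as [=] by
    (transitivity p; [symmetry|]; apply Hp; simpl; auto).
  auto.
Qed.

End Decomposition.

Lemma topI (O : group) (x y : O -> Prop) :
  (forall w, exists a c, x a /\ y c /\ w = gadd a c) ->
  (forall a c a' c', x a -> y c -> x a' -> y c' -> gadd a c = gadd a' c' ->
     a = a' /\ c = c') ->
  top x y.
Proof.
  intros Hex Huniq w; destruct (Hex w) as (a & c & Ha & Hc & E).
  exists (a, c); split; [simpl; auto|].
  intros [a' c'] (Ha' & Hc' & E'); simpl in *.
  destruct (Huniq a c a' c') as [-> ->]; congruence.
Qed.

Section Torsors.
Variables T1 T2 T3 : Type.
Variables (G1 : T1 -> Prop) (G2 : T2 -> Prop) (G3 : T3 -> Prop).
Variables (m1 : T1 -> T1 -> T1 -> T1) (m2 : T2 -> T2 -> T2 -> T2)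
  (m3 : T3 -> T3 -> T3 -> T3).

Lemma is_torsor_transport (f : T1 -> T2) :
  torsor_iso G1 m1 G2 m2 f -> is_torsor G1 m1 -> is_torsor G2 m2.
Proof.
  intros (Hf & _ & Hsurj & Hhom) (Hstab & Hassoc & Hid).
  split; [|split].
  - intros x y z Gx Gy Gz.
    destruct (Hsurj x Gx) as [a [Ga <-]], (Hsurj y Gy) as [c [Gc <-]],
      (Hsurj z Gz) as [d [Gd <-]].
    rewrite <- Hhom; auto.
  - intros x y z u v Gx Gy Gz Gu Gv.
    destruct (Hsurj x Gx) as [a [Ga <-]], (Hsurj y Gy) as [c [Gc <-]],
      (Hsurj z Gz) as [d [Gd <-]], (Hsurj u Gu) as [e [Ge <-]],
      (Hsurj v Gv) as [g [Gg <-]].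
    rewrite <- (Hhom d e g), <- (Hhom e d c), <- (Hhom a c d) by auto.
    rewrite <- (Hhom a c), <- (Hhom a), <- Hhom by (try apply Hstab; auto).
    destruct (Hassoc a c d e g) as [A1 A2]; auto; split; congruence.
  - intros x y Gx Gy.
    destruct (Hsurj x Gx) as [a [Ga <-]], (Hsurj y Gy) as [c [Gc <-]].
    rewrite <- !Hhom by auto.
    destruct (Hid a c) as [I1 I2]; auto; split; congruence.
Qed.

Lemma torsor_iso_comp (f : T1 -> T2) (g : T2 -> T3) :
  torsor_iso G1 m1 G2 m2 f -> torsor_iso G2 m2 G3 m3 g ->
  torsor_iso G1 m1 G3 m3 (fun a => g (f a)).
Proof.
  intros (Hf & Hfinj & Hfsurj & Hfhom) (Hg & Hginj & Hgsurj & Hghom).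
  split; [auto|split; [auto|split]].
  - intros z Gz; destruct (Hgsurj z Gz) as [c [Gc <-]].
    destruct (Hfsurj c Gc) as [a [Ga <-]]; eauto.
  - intros a c d Ga Gc Gd; rewrite Hfhom, Hghom; auto.
Qed.

Lemma is_torsor_rev :
  is_torsor G1 m1 -> is_torsor G1 (fun a c d => m1 d c a).
Proof.
  intros (Hstab & Hassoc & Hid); split; [|split].
  - auto.
  - intros a c d e g Ga Gc Gd Ge Gg.
    destruct (Hassoc g e d c a) as [A1 A2]; auto; split; congruence.
  - intros a c Ga Gc; destruct (Hid a c) as [I1 I2]; auto.
Qed.

Lemma torsor_iso_rev (f : T1 -> T2) :
  torsor_iso G1 m1 G2 m2 f ->
  torsor_iso G1 (fun a c d => m1 d c a) G2 (fun a c d => m2 d c a) f.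
Proof. intros (Hf & Hinj & Hsurj & Hhom); split; [|split; [|split]]; auto. Qed.

End Torsors.

Lemma is_torsor_pw_law (O : group) (A : Type) (G : (A -> O) -> Prop) :
  (forall s s' s'', G s -> G s' -> G s'' -> G (pw_law s s' s'')) ->
  is_torsor G (@pw_law O A).
Proof.
  intro Hstab; split; [exact Hstab|split]; intros;
    unfold pw_law; split; apply functional_extensionality; intro; gsimpl;
    reflexivity.
Qed.

Section LeftCosets.
Variable O : group.
Variable b : O -> Prop.
Hypothesis Hb : is_subgroup b.
Local Notation "x + y" := (@gadd O x y).
Local Notation "- x" := (@gopp O x).

Lemma subgroup0 : b gzero.
Proof. apply Hb. Qed.
Lemma subgroupD (x y : O) : b x -> b y -> b (x + y).
Proof. apply Hb. Qed.
Lemma subgroupN (x : O) : b x -> b (- x).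
Proof. apply Hb. Qed.
Local Hint Resolve subgroup0 subgroupD subgroupN : core.

Lemma lcoset_mem (w : O) : lcoset b w w.
Proof. exists gzero; split; auto; symmetry; apply gadd0r. Qed.

Lemma lcoset_eq {w w' : O} : b (- w + w') -> lcoset b w' = lcoset b w.
Proof.
  intro Hd; apply functional_extensionality; intro xi;
    apply propositional_extensionality; split; intros [beta [Hbeta ->]].
  - exists ((- w + w') + beta); split; auto; gsimpl; reflexivity.
  - exists (- (- w + w') + beta); split; auto; gsimpl; reflexivity.
Qed.

Lemma lcoset_mem_eq {w xi : O} : lcoset b w xi -> lcoset b xi = lcoset b w.
Proof. intros [beta [Hbeta ->]]; apply lcoset_eq; gsimpl; exact Hbeta. Qed.

Lemma LCosets_mem_eq {C : LCosets b} {xi : O} :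
  proj1_sig C xi -> lcoset b xi = proj1_sig C.
Proof. destruct C as [C [w ->]]; apply lcoset_mem_eq. Qed.

Definition lcoset_of (w : O) : LCosets b :=
  exist _ (lcoset b w) (ex_intro _ w eq_refl).

Lemma lcoset_of_mem (C : LCosets b) (w : O) : proj1_sig C w -> lcoset_of w = C.
Proof. intro Hw; apply sig_eq; exact (LCosets_mem_eq Hw). Qed.

Lemma top_meets_LCosets (x : O -> Prop) :
  top x b -> forall C : LCosets b, exists xi, x xi /\ proj1_sig C xi.
Proof.
  intros Hx [C [w ->]]; destruct (top_decomp Hx w) as (xi & beta & Hxi & Hbeta & ->).
  exists xi; split; auto; exists (- beta); split; auto; gsimpl; reflexivity.
Qed.

Lemma top_lcoset_unique {x : O -> Prop} {xi xi' : O} :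
  top x b -> x xi -> x xi' -> b (- xi + xi') -> xi = xi'.
Proof.
  intros Hx Hxi Hxi' Hd.
  refine (proj1 (top_decomp_unique Hx Hxi Hd Hxi' subgroup0 _)).
  gsimpl; reflexivity.
Qed.

Lemma lcoset_diff {w xi xi' : O} :
  lcoset b w xi -> lcoset b w xi' -> b (- xi + xi').
Proof. intros [beta [Hbeta ->]] [beta' [Hbeta' ->]]; gsimpl; auto. Qed.

Lemma lsection_mem (s : LCosets b -> O) (C : LCosets b) :
  lsection s -> proj1_sig C (s C).
Proof. intro Hs; rewrite <- (Hs C); apply lcoset_mem. Qed.

Lemma lsection_diff (s s' : LCosets b -> O) (C : LCosets b) :
  lsection s -> lsection s' -> b (- s C + s' C).
Proof.
  intros Hs Hs'; pose proof (lsection_mem C Hs) as M;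
    pose proof (lsection_mem C Hs') as M'.
  destruct C as [C [w ->]]; exact (lcoset_diff M M').
Qed.

Lemma lsection_coset_eq {s s' : LCosets b -> O} {C C' : LCosets b} :
  lsection s -> lsection s' -> b (- s C + s' C') -> C = C'.
Proof.
  intros Hs Hs' Hd; apply sig_eq.
  rewrite <- (Hs C), <- (Hs' C'), (lcoset_eq Hd); reflexivity.
Qed.

Lemma lsection_pw_law (s s' s'' : LCosets b -> O) :
  lsection s -> lsection s' -> lsection s'' -> lsection (pw_law s s' s'').
Proof.
  intros Hs Hs' Hs'' C; rewrite <- (Hs C); apply lcoset_eq; unfold pw_law.
  gsimpl; apply lsection_diff; auto.
Qed.

Lemma lsection_torsor : is_torsor (@lsection O b) (@pw_law O (LCosets b)).
Proof. apply is_torsor_pw_law, lsection_pw_law. Qed.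

Lemma image_lsection_top (s : LCosets b -> O) :
  lsection s -> top (image s) b.
Proof.
  intro Hs; apply topI.
  - intro w; destruct (lsection_mem (lcoset_of w) Hs) as [beta [Hbeta E]].
    exists (s (lcoset_of w)), (- beta); split; [eexists; reflexivity|].
    split; auto; rewrite E; gsimpl; reflexivity.
  - intros xi e xi' e' [C <-] He [C' <-] He' E.
    assert (C = C') as <-.
    { apply (lsection_coset_eq Hs Hs); rewrite (gadd_eq_sub E); auto. }
    split; [reflexivity|eapply gaddI; exact E].
Qed.

Lemma image_lsection_inj (s s' : LCosets b -> O) :
  lsection s -> lsection s' -> image s = image s' -> s = s'.
Proof.
  intros Hs Hs' E; apply functional_extensionality; intro C.
  assert (image s' (s C)) as [C' E'] by (rewrite <- E; exists C; reflexivity).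
  assert (C' = C) as ->.
  { apply (lsection_coset_eq Hs' Hs); rewrite E'; gsimpl; auto. }
  symmetry; exact E'.
Qed.

Lemma image_lsection_surj (x : O -> Prop) :
  top x b -> exists s : LCosets b -> O, lsection s /\ image s = x.
Proof.
  intro Hx.
  destruct (functional_choice _ (top_meets_LCosets Hx)) as [s Hsx].
  exists s; split.
  - intro C; exact (LCosets_mem_eq (proj2 (Hsx C))).
  - apply functional_extensionality; intro xi;
      apply propositional_extensionality; split.
    + intros [C <-]; apply Hsx.
    + intro Hxi; exists (lcoset_of xi).
      destruct (Hsx (lcoset_of xi)) as [Hsxi Hmem].
      symmetry; apply (top_lcoset_unique Hx Hxi Hsxi).
      exact (lcoset_diff (lcoset_mem xi) Hmem).
Qed.

Lemma image_lsection_pw_law (s s' s'' : LCosets b -> O) :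
  lsection s -> lsection s' -> lsection s'' ->
  image (pw_law s s' s'') = Sigma b (image s) (image s') (image s'').
Proof.
  intros Hs Hs' Hs''; apply functional_extensionality; intro w;
    apply propositional_extensionality; split.
  - intros [C <-]; unfold pw_law.
    (* chosen so that w + β = s C and w + β' = s'' C *)
    exists (- s'' C + s' C), ((- s'' C + s' C) + (- s C + s'' C)).
    split; [apply lsection_diff; auto|].
    split; [apply subgroupD; apply lsection_diff; auto|].
    split; [|split]; exists C; gsimpl; reflexivity.
  - intros (beta & beta' & Hbeta & Hbeta' & [C1 E1] & [C2 E2] & [C3 E3]).
    assert (C1 = C3) as <-.
    { apply (lsection_coset_eq Hs Hs''); rewrite E1, E3; gsimpl; auto. }
    assert (C2 = C1) as <-.
    { apply (lsection_coset_eq Hs' Hs''); rewrite E2, E3; gsimpl; auto. }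
    exists C2; unfold pw_law; rewrite E1, E2, E3; gsimpl; reflexivity.
Qed.

Lemma lsection_image_iso :
  torsor_iso (@lsection O b) (@pw_law O (LCosets b)) (Utop b) (Sigma b)
    (@image O (LCosets b)).
Proof.
  split; [|split; [|split]].
  - exact image_lsection_top.
  - exact image_lsection_inj.
  - exact image_lsection_surj.
  - exact image_lsection_pw_law.
Qed.

Lemma Utop_torsor : is_torsor (Utop b) (Sigma b).
Proof. exact (is_torsor_transport lsection_image_iso lsection_torsor). Qed.

Section Transversal.
Variable y : O -> Prop.
Hypothesis Hy : top y b.

Definition lcoset_rep (C : LCosets b) : {eta : O | y eta} :=
  let (eta, Heta) := constructive_indefinite_description _ (top_meets_LCosets Hy C)
  in exist _ eta (proj1 Heta).

Lemma lcoset_rep_mem (C : LCosets b) : proj1_sig C (proj1_sig (lcoset_rep C)).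
Proof.
  unfold lcoset_rep; destruct (constructive_indefinite_description _ _) as [eta [Heta H]].
  exact H.
Qed.

Lemma lcoset_rep_of (eta : {eta : O | y eta}) :
  lcoset_rep (lcoset_of (proj1_sig eta)) = eta.
Proof.
  set (C := lcoset_of (proj1_sig eta)).
  apply sig_eq; symmetry.
  apply (top_lcoset_unique Hy (proj2_sig eta) (proj2_sig (lcoset_rep C))).
  exact (lcoset_diff (lcoset_mem _) (lcoset_rep_mem C)).
Qed.

Definition section_of_map (F : {eta : O | y eta} -> O) (C : LCosets b) : O :=
  proj1_sig (lcoset_rep C) + F (lcoset_rep C).

Lemma section_of_map_lsection (F : {eta : O | y eta} -> O) :
  maps_into b F -> lsection (section_of_map F).
Proof.
  intros HF C.
  assert (b (- proj1_sig (lcoset_rep C) + section_of_map F C)) as Hd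
    by (unfold section_of_map; gsimpl; apply HF).
  rewrite (lcoset_eq Hd); exact (LCosets_mem_eq (lcoset_rep_mem C)).
Qed.

Lemma section_of_map_iso :
  torsor_iso (@maps_into O y b) (@pw_law O {eta : O | y eta})
    (@lsection O b) (@pw_law O (LCosets b)) section_of_map.
Proof.
  split; [|split; [|split]].
  - exact section_of_map_lsection.
  - intros F F' _ _ E; apply functional_extensionality; intro eta.
    pose proof (equal_f E (lcoset_of (proj1_sig eta))) as E'.
    unfold section_of_map in E'; rewrite lcoset_rep_of in E'.
    eapply gaddI; exact E'.
  - intros s Hs; exists (fun eta => - proj1_sig eta + s (lcoset_of (proj1_sig eta))).
    split.
    + intro eta; exact (lcoset_diff (lcoset_mem _) (lsection_mem (lcoset_of _) Hs)).
    + apply functional_extensionality; intro C; unfold section_of_map.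
      rewrite gaddNKr; f_equal; apply lcoset_of_mem, lcoset_rep_mem.
  - intros F F' F'' _ _ _; apply functional_extensionality; intro C.
    unfold section_of_map, pw_law; gsimpl; reflexivity.
Qed.

Lemma graph_set_image : @graph_set O y = fun F => image (section_of_map F).
Proof.
  apply functional_extensionality; intro F; apply functional_extensionality; intro w;
    apply propositional_extensionality; split.
  - intros [eta ->]; exists (lcoset_of (proj1_sig eta)); unfold section_of_map.
    rewrite lcoset_rep_of; reflexivity.
  - intros [C <-]; exists (lcoset_rep C); reflexivity.
Qed.

Lemma maps_into_torsor : is_torsor (@maps_into O y b) (@pw_law O {eta : O | y eta}).
Proof.
  apply is_torsor_pw_law; intros F F' F'' HF HF' HF'' eta; unfold pw_law; auto.
Qed.

Lemma graph_set_iso :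
  torsor_iso (@maps_into O y b) (@pw_law O {eta : O | y eta}) (Utop b) (Sigma b)
    (@graph_set O y).
Proof.
  rewrite graph_set_image; exact (torsor_iso_comp section_of_map_iso lsection_image_iso).
Qed.

End Transversal.
End LeftCosets.

Definition opp_group (O : group) : group.
Proof.
  refine (@Group (carrier O) (fun x y => gadd y x) gzero gopp _ _ _ _ _).
  - intros; symmetry; apply gaddA.
  - apply gadd0r.
  - apply gadd0l.
  - apply gaddNr.
  - apply gaddNl.
Defined.

Lemma top_opp_of (O : group) (x y : O -> Prop) : top y x -> @top (opp_group O) x y.
Proof.
  intro H; apply topI.
  - intro w; destruct (top_decomp H w) as (c & a & Hc & Ha & E); exists a, c; auto.
  - intros a c a' c' Ha Hc Ha' Hc' E.
    destruct (top_decomp_unique H Hc Ha Hc' Ha' E); auto.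
Qed.

Section OppositeGroup.
Variable O : group.
Variable b : O -> Prop.

Lemma is_subgroup_opp : is_subgroup b -> @is_subgroup (opp_group O) b.
Proof. intros (H0 & HD & HN); split; [exact H0|split]; intros; simpl; auto. Qed.

Lemma Ucheck_opp : Ucheck b = @Utop (opp_group O) b.
Proof.
  apply functional_extensionality; intro x; apply propositional_extensionality.
  split; [apply top_opp_of|exact (@top_opp_of (opp_group O) b x)].
Qed.

Lemma Sigma_check_opp : Sigma_check b = fun x u z => @Sigma (opp_group O) b z u x.
Proof.
  do 4 (apply functional_extensionality; intro).
  apply propositional_extensionality; unfold Sigma_check, Sigma; simpl.
  split; intros (beta & beta' & H); exists beta, beta'; rewrite ?gaddA in *; tauto.
Qed.

Lemma pw_law_RCosets_opp :
  @pw_law O (RCosets b) =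
    fun s s' s'' => @pw_law (opp_group O) (@LCosets (opp_group O) b) s'' s' s.
Proof.
  do 4 (apply functional_extensionality; intro); unfold pw_law; simpl.
  symmetry; apply gaddA.
Qed.

End OppositeGroup.

Theorem theorem5p1 (O : group) (b y : O -> Prop)
  (Hb : is_subgroup b) (Hy : top y b) :
  is_torsor (Utop b) (Sigma b) /\
  is_torsor (@lsection O b) (@pw_law O (LCosets b)) /\
  torsor_iso (@lsection O b) (@pw_law O (LCosets b)) (Utop b) (Sigma b) (@image O (LCosets b)) /\
  is_torsor (@maps_into O y b) (@pw_law O {eta : O | y eta}) /\
  torsor_iso (@maps_into O y b) (@pw_law O {eta : O | y eta}) (Utop b) (Sigma b) (@graph_set O y) /\
  is_torsor (Ucheck b) (Sigma_check b) /\
  is_torsor (@rsection O b) (@pw_law O (RCosets b)) /\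
  torsor_iso (@rsection O b) (@pw_law O (RCosets b)) (Ucheck b) (Sigma_check b) (@image O (RCosets b)).
Proof.
  pose proof (is_subgroup_opp Hb) as Hb_opp.
  rewrite Ucheck_opp, Sigma_check_opp, pw_law_RCosets_opp.
  refine (conj (Utop_torsor Hb) (conj (lsection_torsor Hb)
    (conj (lsection_image_iso Hb) (conj (maps_into_torsor Hb y)
    (conj (graph_set_iso Hb Hy) (conj _ (conj _ _))))))).
  (* RCosets and rsection over O are convertible to LCosets and lsection over
     opp_group O. *)
  - exact (is_torsor_rev (Utop_torsor Hb_opp)).
  - exact (is_torsor_rev (lsection_torsor Hb_opp)).
  - exact (torsor_iso_rev (lsection_image_iso Hb_opp)).
Qed.
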